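(* Let $b(r)$ be a smooth positive function on an open interval of $r>0$ and consider the metric $ds^2=-b^2dt^2+b^{-2}dr^2+r^2(d\theta^2+\sin^2\theta\,d\phi^2)$. Let $\kappa_1,\kappa_2$ be constants, set $\Lambda=-\kappa_1$, $\lambda=-\kappa_2$, and let $$K_{kl}=\kappa_2r^2\,u_ku_l+(\kappa_1+2\kappa_2r^2)g_{kl}-\kappa_2r^2\,\chi_k\chi_l .$$ Then the vacuum conformal Killing gravity equations $R_{kl}-\tfrac12Rg_{kl}=K_{kl}$ hold if and only if there is a constant $M$ such that $$b^2(r)=1-\frac{2M}{r}-\frac{\Lambda}{3}r^2-\frac{\lambda}{5}r^4 .$$
   Context: $u_k$ is the unit timelike covector with components $u_0=-b$ and all others zero; $\chi_k$ is the unit radial covector with $\chi_r=1/b$ and all others zero. $R_{kl}$ is the Ricci tensor and $R$ the scalar curvature. The tensor $K_{kl}$ is the divergence-free conformal Killing tensor $\mathsf A u_ku_l+\mathsf Bg_{kl}+\mathsf C\chi_k\chi_l$ with $\mathsf A=\kappa_2 f_2^2-2\kappa_3 b^2$, $\mathsf B=\kappa_1+2\kappa_2 f_2^2+\kappa_3 b^2$, $\mathsf C=-\kappa_2 f_2^2$, specialized to $f_2=r$ and $\kappa_3=0$ (the case $h=bf_1=1$). *)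

From Stdlib Require Import Reals.
From Coquelicot Require Import Coquelicot.
Open Scope R_scope.

(* Coordinates x : nat -> R with x 0 = t, x 1 = r, x 2 = theta, x 3 = phi. *)
Definition coords := nat -> R.

Definition sum4 (f : nat -> R) : R := f 0%nat + f 1%nat + f 2%nat + f 3%nat.

Definition pd (f : coords -> R) (k : nat) (x : coords) : R :=
  Derive (fun h => f (fun i => if Nat.eqb i k then h else x i)) (x k).

(* A metric is given by its covariant components g_{kl}(x) and its inverse
   g^{kl}(x). *)
Definition tensor2 := coords -> nat -> nat -> R.

Definition christoffel (g ginv : tensor2) (x : coords) (m k l : nat) : R :=
  / 2 * sum4 (fun n => ginv x m n *
     (pd (fun y => g y n l) k x + pd (fun y => g y n k) l x
      - pd (fun y => g y k l) n x)).

Definition ricci (g ginv : tensor2) (x : coords) (k l : nat) : R :=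
  sum4 (fun m => pd (fun y => christoffel g ginv y m k l) m x)
  - sum4 (fun m => pd (fun y => christoffel g ginv y m k m) l x)
  + sum4 (fun m => sum4 (fun n =>
        christoffel g ginv x m m n * christoffel g ginv x n k l
      - christoffel g ginv x m l n * christoffel g ginv x n k m)).

Definition scalar_curv (g ginv : tensor2) (x : coords) : R :=
  sum4 (fun k => sum4 (fun l => ginv x k l * ricci g ginv x k l)).

Definition einstein (g ginv : tensor2) (x : coords) (k l : nat) : R :=
  ricci g ginv x k l - / 2 * scalar_curv g ginv x * g x k l.

Definition diag_metric (d : coords -> nat -> R) : tensor2 :=
  fun x k l => if Nat.eqb k l then d x k else 0.
Definition diag_inv (d : coords -> nat -> R) : tensor2 :=
  fun x k l => if Nat.eqb k l then / d x k else 0.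

Definition sss_diag (b : R -> R) (x : coords) (k : nat) : R :=
  match k with
  | 0%nat => - (b (x 1%nat)) ^ 2
  | 1%nat => / (b (x 1%nat)) ^ 2
  | 2%nat => (x 1%nat) ^ 2
  | _ => (x 1%nat) ^ 2 * (sin (x 2%nat)) ^ 2
  end.

Definition sss_g (b : R -> R) : tensor2 := diag_metric (sss_diag b).
Definition sss_ginv (b : R -> R) : tensor2 := diag_inv (sss_diag b).

(* unit timelike covector u_k: u_0 = -b; unit radial covector chi_r = 1/b *)
Definition u_cov (b : R -> R) (x : coords) (k : nat) : R :=
  if Nat.eqb k 0 then - b (x 1%nat) else 0.
Definition chi_cov (b : R -> R) (x : coords) (k : nat) : R :=
  if Nat.eqb k 1 then / b (x 1%nat) else 0.

Definition K_tensor (b : R -> R) (kappa1 kappa2 : R) (x : coords) (k l : nat) : R :=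
  let r := x 1%nat in
  kappa2 * r ^ 2 * u_cov b x k * u_cov b x l
  + (kappa1 + 2 * kappa2 * r ^ 2) * sss_g b x k l
  - kappa2 * r ^ 2 * chi_cov b x k * chi_cov b x l.

(* The metric depends on b only through f = b^2, and for
   -f dt^2 + dr^2/f + r^2 dOmega^2 the Einstein tensor has the components
   G_tt = f (1 - f - r f') / r^2,  G_rr = (r f' + f - 1) / (r^2 f),
   G_thth = r^2 f''/2 + r f',  G_phph = sin^2 theta G_thth.
   Against K the tt- and rr-equations both say (r f)' = 1 + k1 r^2 + k2 r^4,
   whose solutions on an interval are f = 1 - 2M/r + k1 r^2/3 + k2 r^4/5; the
   angular equations are r/2 times the r-derivative of that equation, so they
   hold automatically. *)

From Stdlib Require Import Reals Lra Lia Classical.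
From Coquelicot Require Import Coquelicot.
Open Scope R_scope.

Definition set_coord (x : coords) (k : nat) (h : R) : coords :=
  fun i => if Nat.eqb i k then h else x i.

Lemma pd_ext_loc (f g : coords -> R) (k : nat) (x : coords) :
  locally (x k) (fun h => f (set_coord x k h) = g (set_coord x k h)) ->
  pd f k x = pd g k x.
Proof. exact (Derive_ext_loc _ _ (x k)). Qed.

Definition is_interval (I : R -> Prop) : Prop :=
  forall a c t, I a -> I c -> a <= t <= c -> I t.

Lemma is_interval_Rbar (r1 r2 : Rbar) :
  is_interval (fun r : R => Rbar_lt r1 r /\ Rbar_lt r r2).
Proof.
  intros a c t [Ha1 Ha2] [Hc1 Hc2] Ht.
  destruct r1, r2; simpl in *; split; auto; lra.
Qed.

Lemma open_Rbar_interval (r1 r2 : Rbar) :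
  open (fun r : R => Rbar_lt r1 r /\ Rbar_lt r r2).
Proof. exact (open_and _ _ (open_Rbar_gt r1) (open_Rbar_lt r2)). Qed.

Lemma is_derive_0_const (I : R -> Prop) (g : R -> R) (a c : R) :
  is_interval I -> (forall t, I t -> is_derive g t 0) -> I a -> I c -> g c = g a.
Proof.
  intros HI Hg Ia Ic.
  assert (Hac : forall t, Rmin a c <= t <= Rmax a c -> I t).
  { intros t Ht. destruct (Rle_dec a c).
    - rewrite Rmin_left, Rmax_right in Ht by lra. eauto.
    - rewrite Rmin_right, Rmax_left in Ht by lra. eauto. }
  destruct (MVT_gen g a c (fun _ => 0)) as [t [_ Ht]].
  - intros t Ht. apply Hg, Hac; lra.
  - intros t Ht. apply continuity_pt_filterlim, (ex_derive_continuous (V := R_NormedModule)).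
    exists 0. apply Hg, Hac; lra.
  - lra.
Qed.

Definition static_diag (f : R -> R) (x : coords) (k : nat) : R :=
  match k with
  | 0%nat => - f (x 1%nat)
  | 1%nat => / f (x 1%nat)
  | 2%nat => x 1%nat ^ 2
  | _ => x 1%nat ^ 2 * sin (x 2%nat) ^ 2
  end.

Definition static_g (f : R -> R) : tensor2 := diag_metric (static_diag f).
Definition static_ginv (f : R -> R) : tensor2 := diag_inv (static_diag f).

Lemma sss_g_static (b : R -> R) : sss_g b = static_g (fun r => b r ^ 2).
Proof. reflexivity. Qed.

Lemma sss_ginv_static (b : R -> R) : sss_ginv b = static_ginv (fun r => b r ^ 2).
Proof. reflexivity. Qed.

Definition static_dg (f f1 : R -> R) (x : coords) (n l k : nat) : R :=
  let r := x 1%nat in let th := x 2%nat in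
  if Nat.eqb n l then
    match n, k with
    | 0, 1 => - f1 r
    | 1, 1 => - f1 r / f r ^ 2
    | 2, 1 => 2 * r
    | S (S (S _)), 1 => 2 * r * sin th ^ 2
    | S (S (S _)), 2 => 2 * r ^ 2 * sin th * cos th
    | _, _ => 0
    end
  else 0.

Definition static_christoffel (f f1 : R -> R) (x : coords) (m k l : nat) : R :=
  let r := x 1%nat in let th := x 2%nat in
  match m, k, l with
  | 0, 0, 1 | 0, 1, 0 => f1 r / (2 * f r)
  | 1, 0, 0 => f r * f1 r / 2
  | 1, 1, 1 => - f1 r / (2 * f r)
  | 1, 2, 2 => - r * f r
  | 1, 3, 3 => - r * f r * sin th ^ 2
  | 2, 1, 2 | 2, 2, 1 | 3, 1, 3 | 3, 3, 1 => / r
  | 2, 3, 3 => - sin th * cos th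
  | 3, 2, 3 | 3, 3, 2 => cos th / sin th
  | _, _, _ => 0
  end.

Definition static_ricci (f f1 f2 r s : R) (k l : nat) : R :=
  match k, l with
  | 0, 0 => f * (f2 / 2 + f1 / r)
  | 1, 1 => - (f2 / 2 + f1 / r) / f
  | 2, 2 => 1 - f - r * f1
  | 3, 3 => s ^ 2 * (1 - f - r * f1)
  | _, _ => 0
  end.

Definition static_einstein (f f1 f2 r s : R) (k l : nat) : R :=
  match k, l with
  | 0, 0 => f * (1 - f - r * f1) / r ^ 2
  | 1, 1 => (r * f1 + f - 1) / (r ^ 2 * f)
  | 2, 2 => r ^ 2 * f2 / 2 + r * f1
  | 3, 3 => s ^ 2 * (r ^ 2 * f2 / 2 + r * f1)
  | _, _ => 0
  end.

Ltac nonzero :=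
  repeat first [ assumption | split | apply Rmult_integral_contrapositive_currified
               | apply Rinv_neq_0_compat | apply Ropp_neq_0_compat
               | apply pow_nonzero | lra ].

Section StaticCurvature.

Variables (f f1 f2 : R -> R) (I : R -> Prop).
Hypothesis I_open : open I.
Hypothesis I_ne0 : forall r, I r -> r <> 0.
Hypothesis f_ne0 : forall r, I r -> f r <> 0.
Hypothesis f_der : forall r, I r -> is_derive f r (f1 r).
Hypothesis f1_der : forall r, I r -> is_derive f1 r (f2 r).

Definition admissible (x : coords) : Prop := I (x 1%nat) /\ 0 < x 2%nat < PI.

Lemma admissible_locally (x : coords) (k : nat) :
  admissible x -> locally (x k) (fun h => admissible (set_coord x k h)).
Proof.
  intros [Ix Hth]; unfold admissible, set_coord.
  destruct k as [|[|[|k]]]; cbn [Nat.eqb].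
  - now apply filter_forall.
  - apply (filter_imp I); [now intros h Ih | now apply I_open].
  - apply (filter_imp (fun h => 0 < h < PI)); [now intros h Ih |].
    now apply (open_and _ _ (open_gt 0) (open_lt PI)).
  - now apply filter_forall.
Qed.

Lemma pd_static_g (x : coords) (n l k : nat) :
  I (x 1%nat) -> pd (fun y => static_g f y n l) k x = static_dg f f1 x n l k.
Proof.
  intros Ix.
  assert (Hf := f_der _ Ix). assert (Hf0 := f_ne0 _ Ix).
  assert (E : Derive (fun z => f z) (x 1%nat) = f1 (x 1%nat)) by now apply is_derive_unique.
  assert (Ef : ex_derive f (x 1%nat)) by now exists (f1 (x 1%nat)).
  unfold pd, static_g, diag_metric, static_dg.
  destruct (Nat.eqb n l); [| apply Derive_const].
  destruct n as [|[|[|n]]]; destruct k as [|[|[|k]]];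
    cbn [Nat.eqb static_diag]; try apply Derive_const;
    apply is_derive_unique; auto_derive; rewrite ?E;
    solve [ repeat split; assumption | field; assumption ].
Qed.

Lemma admissible_sin_ne0 (x : coords) : admissible x -> sin (x 2%nat) <> 0.
Proof. intros [_ [H0 Hpi]]. apply Rgt_not_eq, sin_gt_0; assumption. Qed.

Lemma christoffel_static (x : coords) (m k l : nat) :
  admissible x -> (m < 4)%nat -> (k < 4)%nat -> (l < 4)%nat ->
  christoffel (static_g f) (static_ginv f) x m k l = static_christoffel f f1 x m k l.
Proof.
  intros Hx Hm Hk Hl.
  assert (Hs := admissible_sin_ne0 x Hx). destruct Hx as [Ix _].
  assert (Hr := I_ne0 _ Ix). assert (Hf0 := f_ne0 _ Ix).
  unfold christoffel, sum4; rewrite !pd_static_g by exact Ix.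
  destruct m as [|[|[|[|m]]]]; try lia; destruct k as [|[|[|[|k]]]]; try lia;
    destruct l as [|[|[|[|l]]]]; try lia;
    unfold static_ginv, diag_inv, static_dg, static_christoffel, static_diag;
    cbn [Nat.eqb]; field; nonzero.
Qed.

Lemma pd_christoffel_static (x : coords) (m k l j : nat) :
  admissible x -> (m < 4)%nat -> (k < 4)%nat -> (l < 4)%nat ->
  pd (fun y => christoffel (static_g f) (static_ginv f) y m k l) j x =
  pd (fun y => static_christoffel f f1 y m k l) j x.
Proof.
  intros Hx Hm Hk Hl. apply pd_ext_loc.
  apply (filter_imp (fun h => admissible (set_coord x j h))).
  - intros h Hh. now apply christoffel_static.
  - now apply admissible_locally.
Qed.

Lemma ricci_static (x : coords) (k l : nat) :
  admissible x -> (k < 4)%nat -> (l < 4)%nat ->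
  let r := x 1%nat in
  ricci (static_g f) (static_ginv f) x k l =
  static_ricci (f r) (f1 r) (f2 r) r (sin (x 2%nat)) k l.
Proof.
  intros Hx Hk Hl r.
  assert (Hs := admissible_sin_ne0 x Hx). assert (Ix := proj1 Hx).
  assert (Hr := I_ne0 _ Ix). assert (Hf0 := f_ne0 _ Ix).
  assert (Ef : ex_derive f r) by (exists (f1 r); now apply f_der).
  assert (Ef1 : ex_derive f1 r) by (exists (f2 r); now apply f1_der).
  assert (E1 : Derive (fun z => f z) r = f1 r) by now apply is_derive_unique, f_der.
  assert (E2 : Derive (fun z => f1 z) r = f2 r) by now apply is_derive_unique, f1_der.
  assert (Hsc : sin (x 2%nat) ^ 2 = 1 - cos (x 2%nat) ^ 2)
    by (rewrite <- (sin2_cos2 (x 2%nat)); unfold Rsqr; ring).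
  destruct k as [|[|[|[|k]]]]; try lia; destruct l as [|[|[|[|l]]]]; try lia;
    unfold ricci, sum4;
    rewrite !pd_christoffel_static, !christoffel_static by first [exact Hx | lia];
    unfold pd, static_christoffel, static_ricci; cbn [Nat.eqb]; fold r;
    repeat (match goal with |- context [Derive ?F ?z] =>
      erewrite (is_derive_unique F z);
        [| auto_derive; [repeat split; first [eassumption | nonzero] | reflexivity]] end;
      rewrite ?E1, ?E2);
    field [Hsc]; nonzero.
Qed.

Lemma einstein_static (x : coords) (k l : nat) :
  admissible x -> (k < 4)%nat -> (l < 4)%nat ->
  let r := x 1%nat in
  einstein (static_g f) (static_ginv f) x k l =
  static_einstein (f r) (f1 r) (f2 r) r (sin (x 2%nat)) k l.
Proof.
  intros Hx Hk Hl r.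
  assert (Hs := admissible_sin_ne0 x Hx).
  assert (Hr := I_ne0 _ (proj1 Hx)). assert (Hf0 := f_ne0 _ (proj1 Hx)).
  destruct k as [|[|[|[|k]]]]; try lia; destruct l as [|[|[|[|l]]]]; try lia;
    unfold einstein, scalar_curv, sum4;
    rewrite !ricci_static by first [exact Hx | lia];
    unfold static_g, static_ginv, diag_metric, diag_inv, static_diag,
      static_ricci, static_einstein; cbn [Nat.eqb]; fold r;
    field; nonzero.
Qed.

End StaticCurvature.

Definition static_K (f k1 k2 r s : R) (k l : nat) : R :=
  match k, l with
  | 0, 0 => - f * (k1 + k2 * r ^ 2)
  | 1, 1 => (k1 + k2 * r ^ 2) / f
  | 2, 2 => (k1 + 2 * k2 * r ^ 2) * r ^ 2
  | 3, 3 => s ^ 2 * ((k1 + 2 * k2 * r ^ 2) * r ^ 2)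
  | _, _ => 0
  end.

Lemma K_tensor_static (b : R -> R) (k1 k2 : R) (x : coords) (k l : nat) :
  b (x 1%nat) <> 0 -> (k < 4)%nat -> (l < 4)%nat ->
  K_tensor b k1 k2 x k l =
  static_K (b (x 1%nat) ^ 2) k1 k2 (x 1%nat) (sin (x 2%nat)) k l.
Proof.
  intros Hb Hk Hl.
  destruct k as [|[|[|[|k]]]]; try lia; destruct l as [|[|[|[|l]]]]; try lia;
    unfold K_tensor, static_K, u_cov, chi_cov, sss_g, diag_metric, sss_diag;
    cbn [Nat.eqb]; field; nonzero.
Qed.

Lemma mass_equation_of_static_00 (f f1 f2 r s k1 k2 : R) :
  f <> 0 -> r <> 0 ->
  static_einstein f f1 f2 r s 0 0 = static_K f k1 k2 r s 0 0 ->
  f + r * f1 = 1 + k1 * r ^ 2 + k2 * r ^ 4.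
Proof.
  unfold static_einstein, static_K; intros Hf Hr E.
  replace (f + r * f1) with (1 - r ^ 2 / f * (f * (1 - f - r * f1) / r ^ 2))
    by (field; nonzero).
  rewrite E; field; nonzero.
Qed.

Lemma static_einstein_eq_K_of_mass_equation (f f1 f2 r s k1 k2 : R) (k l : nat) :
  f <> 0 -> r <> 0 ->
  f + r * f1 = 1 + k1 * r ^ 2 + k2 * r ^ 4 ->
  2 * f1 + r * f2 = 2 * k1 * r + 4 * k2 * r ^ 3 ->
  static_einstein f f1 f2 r s k l = static_K f k1 k2 r s k l.
Proof.
  intros Hf Hr E1 E2.
  assert (G22 : r ^ 2 * f2 / 2 + r * f1 = (k1 + 2 * k2 * r ^ 2) * r ^ 2).
  { replace (r ^ 2 * f2 / 2 + r * f1) with (r / 2 * (2 * f1 + r * f2)) by field.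
    rewrite E2; field. }
  destruct k as [|[|[|[|k]]]]; destruct l as [|[|[|[|l]]]];
    unfold static_einstein, static_K; try reflexivity.
  - replace (1 - f - r * f1) with (- (k1 + k2 * r ^ 2) * r ^ 2) by lra.
    field; nonzero.
  - replace (r * f1 + f - 1) with ((k1 + k2 * r ^ 2) * r ^ 2) by lra.
    field; nonzero.
  - exact G22.
  - now rewrite G22.
Qed.

Definition vacuum_b2 (M k1 k2 r : R) : R :=
  1 - 2 * M / r + k1 / 3 * r ^ 2 + k2 / 5 * r ^ 4.

Lemma vacuum_b2_of_mass_equation (I : R -> Prop) (f f1 : R -> R) (k1 k2 : R) :
  is_interval I -> (forall r, I r -> r <> 0) ->
  (forall r, I r -> is_derive f r (f1 r)) ->
  (forall r, I r -> f r + r * f1 r = 1 + k1 * r ^ 2 + k2 * r ^ 4) ->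
  exists M, forall r, I r -> f r = vacuum_b2 M k1 k2 r.
Proof.
  intros HI Hr Hf Heq.
  destruct (classic (exists r0, I r0)) as [[r0 I0] | Hempty].
  2: { exists 0; intros r Ir; exfalso; eauto. }
  (* the mass function: constant, equal to [-2 M] *)
  set (phi := fun r => r * f r - r - k1 * r ^ 3 / 3 - k2 * r ^ 5 / 5).
  assert (Hphi : forall r, I r -> is_derive phi r 0).
  { intros r Ir.
    assert (E : Derive (fun z => f z) r = f1 r) by now apply is_derive_unique, Hf.
    unfold phi; auto_derive.
    - now exists (f1 r); apply Hf.
    - rewrite E; specialize (Heq r Ir); lra. }
  exists (- phi r0 / 2); intros r Ir.
  unfold vacuum_b2; rewrite <- (is_derive_0_const I phi r0 r HI Hphi I0 Ir).
  unfold phi; field; auto.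
Qed.

Lemma vacuum_b2_of_einstein_00 (b : R -> R) (I : R -> Prop) (k1 k2 : R) :
  open I -> is_interval I -> (forall r, I r -> r <> 0) -> (forall r, I r -> b r <> 0) ->
  (forall r, I r -> ex_derive b r /\ ex_derive (Derive b) r) ->
  (forall x, admissible I x ->
     einstein (sss_g b) (sss_ginv b) x 0 0 = K_tensor b k1 k2 x 0 0) ->
  exists M, forall r, I r -> b r ^ 2 = vacuum_b2 M k1 k2 r.
Proof.
  intros I_open I_int I_ne0 b_ne0 b_der HE.
  set (f1 := fun t => 2 * b t * Derive b t).
  set (f2 := fun t => 2 * (Derive b t ^ 2 + b t * Derive (Derive b) t)).
  assert (f_der : forall r, I r -> is_derive (fun t => b t ^ 2) r (f1 r)).
  { intros r Ir; unfold f1; auto_derive; [apply b_der, Ir |].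
    change (Derive (fun z => b z) r) with (Derive b r); ring. }
  assert (f1_der : forall r, I r -> is_derive f1 r (f2 r)).
  { intros r Ir; destruct (b_der r Ir) as [Eb Edb].
    unfold f1, f2; auto_derive; [now repeat split |].
    change (Derive (fun z => b z) r) with (Derive b r).
    change (Derive (fun z => Derive b z) r) with (Derive (Derive b) r); ring. }
  assert (f_ne0 : forall r, I r -> b r ^ 2 <> 0) by (intros; apply pow_nonzero; auto).
  apply (vacuum_b2_of_mass_equation I _ f1); [exact I_int | exact I_ne0 | exact f_der |].
  intros r Ir.
  set (x := fun i : nat => match i with 1%nat => r | 2%nat => PI / 2 | _ => 0 end).
  assert (Hx : admissible I x) by (split; [exact Ir | simpl; pose proof PI_RGT_0; lra]).
  assert (E := HE x Hx).
  rewrite K_tensor_static in E by first [exact (b_ne0 r Ir) | lia].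
  rewrite sss_g_static, sss_ginv_static,
    (einstein_static _ f1 f2 I I_open I_ne0 f_ne0 f_der f1_der x 0 0 Hx) in E by lia.
  exact (mass_equation_of_static_00 _ _ _ _ _ _ _ (f_ne0 r Ir) (I_ne0 r Ir) E).
Qed.

Lemma einstein_eq_K_of_vacuum_b2 (b : R -> R) (I : R -> Prop) (k1 k2 M : R) :
  open I -> (forall r, I r -> r <> 0) -> (forall r, I r -> b r <> 0) ->
  (forall r, I r -> b r ^ 2 = vacuum_b2 M k1 k2 r) ->
  forall (x : coords) (k l : nat), admissible I x -> (k < 4)%nat -> (l < 4)%nat ->
  einstein (sss_g b) (sss_ginv b) x k l = K_tensor b k1 k2 x k l.
Proof.
  intros I_open I_ne0 b_ne0 Hb x k l Hx Hk Hl.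
  set (f1 := fun r => 2 * M / r ^ 2 + 2 * k1 / 3 * r + 4 * k2 / 5 * r ^ 3).
  set (f2 := fun r => - 4 * M / r ^ 3 + 2 * k1 / 3 + 12 * k2 / 5 * r ^ 2).
  assert (f_der : forall r, I r -> is_derive (fun t => b t ^ 2) r (f1 r)).
  { intros r Ir. apply (is_derive_ext_loc (vacuum_b2 M k1 k2)).
    - apply (filter_imp I); [intros t It; symmetry; now apply Hb | now apply I_open].
    - assert (Hr := I_ne0 r Ir).
      unfold vacuum_b2, f1; auto_derive; [nonzero | field; nonzero]. }
  assert (f1_der : forall r, I r -> is_derive f1 r (f2 r)).
  { intros r Ir. assert (Hr := I_ne0 r Ir).
    unfold f1, f2; auto_derive; [nonzero | field; nonzero]. }
  assert (f_ne0 : forall r, I r -> b r ^ 2 <> 0) by (intros; apply pow_nonzero; auto).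
  assert (Ix := proj1 Hx). assert (Hr := I_ne0 _ Ix).
  rewrite K_tensor_static by first [exact (b_ne0 _ Ix) | lia].
  rewrite sss_g_static, sss_ginv_static,
    (einstein_static _ f1 f2 I I_open I_ne0 f_ne0 f_der f1_der x k l Hx Hk Hl).
  apply static_einstein_eq_K_of_mass_equation; [exact (f_ne0 _ Ix) | exact Hr | |];
    cbv beta; rewrite ?(Hb _ Ix); unfold vacuum_b2, f1, f2; field; exact Hr.
Qed.

Theorem proposition9 (b : R -> R) (r1 r2 : Rbar) (kappa1 kappa2 : R) :
  Rbar_le (Finite 0) r1 -> Rbar_lt r1 r2 ->
  (forall r, Rbar_lt r1 (Finite r) -> Rbar_lt (Finite r) r2 -> 0 < b r) ->
  (forall (n : nat) r, Rbar_lt r1 (Finite r) -> Rbar_lt (Finite r) r2 ->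
     ex_derive_n b n r) ->
  let Lambda := - kappa1 in
  let lambda := - kappa2 in
  (forall x : coords,
     Rbar_lt r1 (Finite (x 1%nat)) -> Rbar_lt (Finite (x 1%nat)) r2 ->
     0 < x 2%nat < PI ->
     forall k l : nat, (k < 4)%nat -> (l < 4)%nat ->
       einstein (sss_g b) (sss_ginv b) x k l = K_tensor b kappa1 kappa2 x k l)
  <->
  exists M : R, forall r, Rbar_lt r1 (Finite r) -> Rbar_lt (Finite r) r2 ->
     (b r) ^ 2 = 1 - 2 * M / r - Lambda / 3 * r ^ 2 - lambda / 5 * r ^ 4.
Proof.
  intros r1_nonneg _ b_pos b_smooth Lambda lambda.
  set (I := fun r : R => Rbar_lt r1 r /\ Rbar_lt r r2).
  assert (I_ne0 : forall r, I r -> r <> 0).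
  { intros r [Hr _]. apply Rgt_not_eq, (Rbar_le_lt_trans _ _ _ r1_nonneg Hr). }
  assert (b_ne0 : forall r, I r -> b r <> 0).
  { intros r [Hr1 Hr2]. apply Rgt_not_eq, b_pos; assumption. }
  assert (vacuum_b2_eq : forall M r,
    vacuum_b2 M kappa1 kappa2 r = 1 - 2 * M / r - Lambda / 3 * r ^ 2 - lambda / 5 * r ^ 4).
  { intros M r; unfold vacuum_b2, Lambda, lambda; lra. }
  split.
  - intros HE.
    destruct (vacuum_b2_of_einstein_00 b I kappa1 kappa2 (open_Rbar_interval r1 r2)
                (is_interval_Rbar r1 r2) I_ne0 b_ne0) as [M HM].
    + intros r [Hr1 Hr2]. exact (conj (b_smooth 1%nat r Hr1 Hr2) (b_smooth 2%nat r Hr1 Hr2)).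
    + intros x [[Hx1 Hx2] Hth]. apply HE; assumption || lia.
    + exists M; intros r Hr1 Hr2. rewrite <- vacuum_b2_eq. apply HM; now split.
  - intros [M HM] x Hx1 Hx2 Hth k l Hk Hl.
    assert (HM' : forall r, I r -> b r ^ 2 = vacuum_b2 M kappa1 kappa2 r).
    { intros r [Hr1 Hr2]. rewrite vacuum_b2_eq. exact (HM r Hr1 Hr2). }
    exact (einstein_eq_K_of_vacuum_b2 b I kappa1 kappa2 M (open_Rbar_interval r1 r2)
              I_ne0 b_ne0 HM' x k l (conj (conj Hx1 Hx2) Hth) Hk Hl).
Qed.
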